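(* For any $i\le r-2$ the divisor $X_i$ restricted to the $L$-resolution is equal to the divisor $X^L_j$, where $j=(i \bmod (r-a))$, and the divisor $X_i$ restricted to the $R$-resolution is equal to the divisor $X^R_j$, where $j=(i \bmod a)$.
   Context: Let $0<a<r$ be coprime integers, $b$ the inverse of $a$ modulo $r$, and for integers $s,t$ let $(s \bmod t)$ denote the least non-negative integer $u$ with $t\mid s-u$. Let $N=\mathbb{Z}^3+\mathbb{Z}\frac1r(1,a,r-a)$, and $p_i=\frac1r\big((-ib \bmod r),\,r-i,\,i\big)$ for $i=0,\ldots,r$ (so $p_0=e_2$, $p_r=e_3$, $p_{r-a}=\frac1r(1,a,r-a)$). The Danilov resolution of the toric singularity $\frac1r(1,a,r-a)$ (cone $\langle e_1,e_2,e_3\rangle$ in $N$) is obtained by the weighted blow-up at $p_{r-a}$ followed recursively by the Danilov resolutions of the cones $\langle e_1,e_2,p_{r-a}\rangle$ and $\langle e_1,e_3,p_{r-a}\rangle$, which are toric singularities of type $\frac{1}{r-a}(1,(r \bmod (r-a)),(-r \bmod (r-a)))$ and $\frac1a(1,(-r \bmod a),(r \bmod a))$ respectively; their resolutions are called the $L$-resolution and the $R$-resolution. Let $D_k$ be the toric divisor of the ray through $p_k$ and $E_1$ the toric divisor of the ray through $e_1$. The permutation $\tau(r,a,\cdot)$ of $\{0,\ldots,r-1\}$ is defined recursively: if $a\in\{1,r-1\}$, $\tau(r,a,i)=(ai-1 \bmod r)$; otherwise $\tau(r,a,i)=\tau(r-a,(r\bmod (r-a)),(i \bmod (r-a)))$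 if $i\ge a$, and $\tau(r,a,i)=(r-a)+\tau(a,(-r \bmod a),i)$ if $i<a$. Set $Z_i=\sum_{k=\tau(r,a,i)+1}^{r}D_k$, and define divisors $X_i$ ($i=0,\ldots,r-1$, indices modulo $r$) by $X_i+Z_{i+1}=Z_i+X_{i-a}$ for all $i$ and $X_0=E_1$. The divisors $X^L_j$ (resp. $X^R_j$) on the $L$- (resp. $R$-)resolution are defined by the same construction with $(r,a)$ replaced by $(r-a,(r\bmod(r-a)))$ (resp. $(a,(-r\bmod a))$). *)

From HB Require Import structures.
From mathcomp Require Import all_boot all_order all_algebra.
Set Implicit Arguments. Unset Strict Implicit. Unset Printing Implicit Defensive.
Import Order.TTheory GRing.Theory Num.Theory.
Local Open Scope ring_scope.

(* Toric divisors on the Danilov resolution of 1/r(1,a,r-a): integer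
   combinations of E_1 (index None) and D_0, ..., D_r (index Some k). *)
Definition tdiv (r : nat) := {ffun option 'I_r.+1 -> int}.

Definition E1 (r : nat) : tdiv r := [ffun o => if o is None then 1 else 0].
Definition Dk (r k : nat) : tdiv r :=
  [ffun o => if o is Some j then ((val j == k) : nat)%:Z else 0].

Fixpoint tau_aux (fuel r a i : nat) : nat :=
  match fuel with
  | 0 => 0%N
  | S f =>
    if (a == 1)%N || (a == r.-1)%N then ((a * i + r.-1) %% r)%N
    else if (a <= i)%N then tau_aux f (r - a) (r %% (r - a)) (i %% (r - a))
    else ((r - a) + tau_aux f a ((a - r %% a) %% a) i)%N
  end.
Definition tau (r a i : nat) : nat := tau_aux r r a i.

Definition Zdiv (r a i : nat) : tdiv r :=
  \sum_((tau r a i).+1 <= k < r.+1) Dk r k.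

Definition IsXfamily (r a : nat) (X : nat -> tdiv r) : Prop :=
  X 0%N = E1 r /\
  forall i, (i < r)%N ->
    X i + Zdiv r a ((i.+1) %% r)%N = Zdiv r a i + X ((i + (r - a)) %% r)%N.

(* Restriction to the L-resolution (cone <e1,e2,p_{r-a}>): its rays are
   e1 and p_0..p_{r-a}; p_k corresponds to p^L_k. *)
Definition resL (r a : nat) (D : tdiv r) : tdiv (r - a)%N :=
  [ffun o => if o is Some j then D (Some (inord (val j))) else D None].

(* Restriction to the R-resolution (cone <e1,e3,p_{r-a}>): its rays are
   e1 and p_{r-a}..p_r; p_{r-a+j} corresponds to p^R_j. *)
Definition resR (r a : nat) (D : tdiv r) : tdiv a :=
  [ffun o => if o is Some j then D (Some (inord (r - a + val j)%N)) else D None].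

Arguments IsXfamily : clear implicits.
Arguments resL : clear implicits.
Arguments resR : clear implicits.
Arguments Zdiv : clear implicits.
Arguments Dk : clear implicits.
Arguments E1 : clear implicits.

From HB Require Import structures.
From mathcomp Require Import all_boot all_order all_algebra.
From mathcomp Require Import zify.
Set Implicit Arguments. Unset Strict Implicit.
Import GRing.Theory.

(* Restricting the relation X_i + Z_(i+1) = Z_i + X_(i-a) to the L-resolution
   gives the relation defining X^L: for a <= i the permutation satisfies
   tau(r,a,i) = tau(r-a, r mod (r-a), i mod (r-a)), while for i < a the
   divisors Z_i restrict to 0; symmetrically on the R-resolution.  Hence the
   difference between the restriction of X_i and X^L_j (resp. X^R_j) is
   invariant under the step i |-> i - a mod r whenever neither index is r-1.
   As a is coprime to r, the orbit of 0 under this step, cut open at r-1, is a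
   path through all of 0, ..., r-2, and the difference vanishes at 0 because
   X_0 = E_1. *)

Lemma coprime_subl a r : (a <= r)%N -> coprime a r -> coprime (r - a) r.
Proof.
move=> le_ar; rewrite /coprime => co.
by rewrite -{2}(subnK le_ar) gcdnDl gcdnC -gcdnDl subnKC.
Qed.

Lemma modnD_compl x y m : (0 < m)%N -> (y <= x)%N ->
  ((x + (m - y %% m)) %% m = (x - y) %% m)%N.
Proof.
move=> m_gt0 le_yx; have lt_ym := ltn_pmod y m_gt0.
have -> : (x + (m - y %% m) = (y %/ m).+1 * m + (x - y))%N.
  by rewrite mulSn; have := divn_eq y m; lia.
by rewrite modnMDl.
Qed.

Lemma modnD_compl_compl j x m : (0 < m)%N ->
  ((j + (m - (m - x %% m) %% m)) %% m = (j + x) %% m)%N.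
Proof.
move=> m_gt0; suff e : ((m - (m - x %% m) %% m) %% m = x %% m)%N.
  by rewrite -modnDmr e modnDmr.
have lt_xm := ltn_pmod x m_gt0.
have [->|x_m_gt0] := posnP (x %% m); first by rewrite subn0 modnn subn0 modnn.
by rewrite (@modn_small (m - x %% m)) ?subKn ?modn_mod //; lia.
Qed.

Lemma modnDB_if j r a : (j < r)%N -> (a <= r)%N ->
  ((j + (r - a)) %% r = if (a <= j)%N then j - a else j + (r - a))%N.
Proof.
move=> lt_jr le_ar; case: leqP => [le_aj|lt_ja]; last by rewrite modn_small; lia.
have -> : (j + (r - a) = (j - a) + r)%N by lia.
by rewrite modnDr modn_small; lia.
Qed.

Lemma modn_predl r : (2 < r)%N -> (r %% (r - 1) = 1)%N.
Proof.
move=> r_gt2; have {1}-> : r = (1 + (r - 1))%N by lia.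
rewrite modnDr modn_small //; lia.
Qed.

Lemma eq_segment (T : Type) (h : nat -> T) m n : (m <= n)%N ->
  (forall t, (m <= t < n)%N -> h t.+1 = h t) -> h n = h m.
Proof.
move=> le_mn step; elim: n le_mn step => [|n IH]; first by case: m.
rewrite leq_eqVlt => /predU1P[<- //|lt_mn] step.
rewrite step; last lia.
by apply: IH => // t le_t; apply: step; lia.
Qed.

Section CyclicOrbit.
Variables (r c : nat).
Hypotheses (r_gt1 : (1 < r)%N) (co_cr : coprime c r).

Lemma mulmod_inj t t' : (t < r)%N -> (t' < r)%N ->
  ((t * c) %% r = (t' * c) %% r)%N -> t = t'.
Proof.
wlog le_tt' : t t' / (t <= t')%N.
  move=> W lt_tr lt_t'r e; case: (leqP t t') => [le|/ltnW le]; first exact: W.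
  by apply/esym/W => //; rewrite e.
move=> lt_tr lt_t'r e.
have : (r %| t' - t)%N.
  rewrite -(@Gauss_dvdl r (t' - t) c) 1?coprime_sym // mulnBl.
  by rewrite -eqn_mod_dvd ?leq_mul2r ?le_tt' ?orbT // e.
by case: (posnP (t' - t)) => [|pos /(dvdn_leq pos)]; lia.
Qed.

Lemma mulmod_surj x : (x < r)%N -> exists2 t, (t < r)%N & ((t * c) %% r)%N = x.
Proof.
move=> lt_xr; have r_gt0 : (0 < r)%N by lia.
pose g (t : 'I_r) : 'I_r := Ordinal (ltn_pmod (t * c) r_gt0).
have g_inj : injective g.
  by move=> t t' /(congr1 val) /= /mulmod_inj e; apply/val_inj/e.
have /codomP[t /(congr1 val) /= e] := injF_onto g_inj (Ordinal lt_xr).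
by exists t; rewrite ?e.
Qed.

Lemma orbit_invariant (T : Type) (f : nat -> T) :
  (forall i, (i <= r - 2)%N -> ((i + c) %% r <= r - 2)%N ->
     f ((i + c) %% r) = f i) ->
  forall i, (i <= r - 2)%N -> f i = f 0%N.
Proof.
move=> step i le_i; pose g t := ((t * c) %% r)%N.
(* The orbit g 0, g 1, ..., g r = g 0 of the step visits every residue once;
   removing its visit g s = r-1 leaves the two paths g 0..g (s-1), g (s+1)..g r. *)
have [s lt_sr gs] := @mulmod_surj r.-1 (ltac:(lia)).
have [t lt_tr gt] := @mulmod_surj i (ltac:(lia)).
have g_small u : (u <= r)%N -> u <> s -> (g u <= r - 2)%N.
  rewrite leq_eqVlt => /predU1P[-> _|lt_ur ne_us]; first by rewrite /g modnMr; lia.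
  have : (g u < r)%N by rewrite ltn_mod; lia.
  suff : g u <> r.-1 by lia.
  by rewrite -gs => /(mulmod_inj lt_ur lt_sr).
have g_step u : (u < r)%N -> u <> s -> u.+1 <> s -> f (g u.+1) = f (g u).
  move=> lt_ur ne_us ne_u1s.
  have e : g u.+1 = ((g u + c) %% r)%N by rewrite /g modnDml mulSn addnC.
  have small_u := g_small u (ltnW lt_ur) ne_us.
  have small_u1 := g_small u.+1 lt_ur ne_u1s.
  by rewrite e step // -e.
rewrite -gt; case: (ltngtP t s) => [lt_ts|lt_st|eq_ts].
- have := @eq_segment _ (f \o g) 0 t (leq0n t); rewrite /= /g mul0n mod0n.
  by apply=> u lt_ut; apply: g_step; lia.
- have := @eq_segment _ (f \o g) t r (ltnW lt_tr); rewrite /= /g modnMr.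
  by move=> <- // u tur; apply: g_step; lia.
- by move: gt; rewrite eq_ts /g gs; lia.
Qed.

End CyclicOrbit.

Definition admissible (r a : nat) := (a < r)%N && coprime a r.

Lemma admissibleL r a : admissible r a -> (0 < a)%N ->
  admissible (r - a) (r %% (r - a)).
Proof.
case/andP=> lt_ar co a_gt0; apply/andP; split; first by rewrite ltn_mod; lia.
by rewrite coprime_modl coprime_sym coprime_subl // ltnW.
Qed.

Lemma admissibleR r a : admissible r a -> (0 < a)%N ->
  admissible a ((a - r %% a) %% a).
Proof.
case/andP=> _ co a_gt0; apply/andP; split; first by rewrite ltn_mod.
rewrite coprime_modl coprime_subl ?(ltnW (ltn_pmod r a_gt0)) //.
by rewrite coprime_modl coprime_sym.
Qed.

Lemma admissible_gt0 r a : admissible r a -> ~~ ((a == 1) || (a == r.-1))%N ->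
  (0 < a)%N.
Proof.
case/andP; case: a => // _; rewrite /coprime gcd0n => /eqP ->.
by rewrite eqxx orbT.
Qed.

Lemma tau_aux_lt f r a i : (a < r)%N -> (tau_aux f r a i < r)%N.
Proof.
elim: f r a i => [|f IH] r a i lt_ar /=; first lia.
case: ifP => _; first by rewrite ltn_mod; lia.
case: ifP => le_ai.
  by have := IH (r - a) (r %% (r - a)) (i %% (r - a)); rewrite ltn_mod; lia.
by have := IH a ((a - r %% a) %% a) i; rewrite ltn_mod; lia.
Qed.

Lemma tau_lt r a i : (a < r)%N -> (tau r a i < r)%N.
Proof. exact: tau_aux_lt. Qed.

Lemma tau_aux_fuel f g r a i : admissible r a -> (r <= f)%N -> (r <= g)%N ->
  tau_aux f r a i = tau_aux g r a i.
Proof.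
elim: f g r a i => [|f IH] [|g] r a i adm; move: (adm) => /andP[lt_ar _]; try lia.
move=> le_rf le_rg /=; case: ifP => base //.
have a_gt0 := admissible_gt0 adm (negbT base).
case: ifP => _; last congr (_ + _)%N.
  by apply: IH; rewrite ?admissibleL //; lia.
by apply: IH; rewrite ?admissibleR //; lia.
Qed.

Lemma tauE r a i : admissible r a ->
  tau r a i =
    if (a == 1)%N || (a == r.-1)%N then ((a * i + r.-1) %% r)%N
    else if (a <= i)%N then tau (r - a) (r %% (r - a)) (i %% (r - a))
    else ((r - a) + tau a ((a - r %% a) %% a) i)%N.
Proof.
move=> adm; move: (adm) => /andP[lt_ar _].
rewrite /tau; case: r lt_ar adm => // r lt_ar adm /=.
case: ifP => base //; have a_gt0 := admissible_gt0 adm (negbT base).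
case: ifP => _; last congr (_ + _)%N.
  by apply: tau_aux_fuel; rewrite ?admissibleL //; lia.
by apply: tau_aux_fuel; rewrite ?admissibleR //; lia.
Qed.

Lemma tau_base m c j : (0 < m)%N -> (c == 1)%N || (c == m.-1)%N ->
  tau m c j = ((c * j + m.-1) %% m)%N.
Proof. by case: m => // m _ base; rewrite /tau /= base. Qed.

Lemma tau_last m j : (j < m)%N -> tau m m.-1 j = (m.-1 - j)%N.
Proof.
move=> lt_jm; rewrite tau_base ?eqxx ?orbT //; last lia.
have -> : (m.-1 * j + m.-1 = j * m + (m.-1 - j))%N by case: m lt_jm => // m /=; nia.
by rewrite modnMDl modn_small //; lia.
Qed.

Lemma tau_L r a i : admissible r a -> (0 < a)%N -> (a <= i < r)%N ->
  tau r a i = tau (r - a) (r %% (r - a)) (i %% (r - a)).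
Proof.
move=> adm a_gt0 /andP[le_ai lt_ir]; rewrite tauE //.
case: ifP => [base|_]; last by rewrite le_ai.
have [a_last|a_nlast] := eqVneq a r.-1.
  have [-> ->] : (r - a = 1 /\ a * i + r.-1 = r.-1 * r)%N by split; nia.
  by rewrite modnMl !modn1 (@tau_last 1 0).
have a1 : a = 1%N by move: base; rewrite (negbTE a_nlast) orbF => /eqP.
have r_gt2 : (2 < r)%N by move: a_nlast; rewrite a1; lia.
rewrite a1 modn_predl //.
rewrite tau_base ?eqxx //; last lia.
rewrite !mul1n modnDml.
have -> : (i + r.-1 = i.-1 + r)%N by lia.
have -> : (i + (r - 1).-1 = i.-1 + (r - 1))%N by lia.
by rewrite !modnDr !modn_small //; lia.
Qed.

Lemma tau_R r a i : admissible r a -> (0 < a)%N -> (i < a)%N ->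
  tau r a i = ((r - a) + tau a ((a - r %% a) %% a) i)%N.
Proof.
move=> adm a_gt0 lt_ia; move: (adm) => /andP[lt_ar _]; rewrite tauE //.
case: ifP => [base|_]; last by rewrite leqNgt lt_ia.
have [a1|a_n1] := eqVneq a 1%N.
  have i0 : i = 0%N by lia.
  by rewrite a1 i0 !modn1 (@tau_last 1 0) // modn_small; lia.
have a_last : a = r.-1 by move: base; rewrite (negbTE a_n1) => /eqP.
have r_gt2 : (2 < r)%N by lia.
have r_mod_a : (r %% a = 1)%N by rewrite a_last -subn1 modn_predl.
rewrite r_mod_a (@modn_small (a - 1)) ?subn1; last lia.
rewrite a_last -tau_base ?eqxx ?orbT; try lia.
by rewrite !tau_last; lia.
Qed.

Local Open Scope ring_scope.

Lemma sum_indicator m n j :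
  \sum_(m <= k < n) ((j == k)%N : nat)%:Z = ((m <= j < n)%N : nat)%:Z.
Proof.
elim: n => [|n IH]; first by rewrite big_geq // ltn0 andbF.
have [le_mn|lt_nm] := leqP m n; last first.
  by rewrite big_geq //; have -> : (m <= j < n.+1)%N = false by lia.
rewrite big_nat_recr //= IH; case: (ltngtP j n) => [lt_jn|lt_nj|->].
- by rewrite (ltn_trans lt_jn (ltnSn n)) andbT addr0.
- by rewrite ltnNge lt_nj andbF addr0.
- by rewrite ltnSn le_mn andbF add0r.
Qed.

Lemma Zdiv_None r a i : Zdiv r a i None = 0.
Proof. by rewrite /Zdiv sum_ffunE big1 // => k _; rewrite ffunE. Qed.

Lemma Zdiv_Some r a i (k : 'I_r.+1) :
  Zdiv r a i (Some k) = ((tau r a i < k)%N : nat)%:Z.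
Proof.
rewrite /Zdiv sum_ffunE; under eq_bigr => j _ do rewrite ffunE.
by rewrite sum_indicator ltn_ord andbT.
Qed.

Lemma resL_add r a (D D' : tdiv r) : resL r a (D + D') = resL r a D + resL r a D'.
Proof. by apply/ffunP => -[j|]; rewrite !ffunE. Qed.

Lemma resR_add r a (D D' : tdiv r) : resR r a (D + D') = resR r a D + resR r a D'.
Proof. by apply/ffunP => -[j|]; rewrite !ffunE. Qed.

Lemma resL_E1 r a : resL r a (E1 r) = E1 (r - a).
Proof. by apply/ffunP => -[j|]; rewrite !ffunE. Qed.

Lemma resR_E1 r a : resR r a (E1 r) = E1 a.
Proof. by apply/ffunP => -[j|]; rewrite !ffunE. Qed.

Section ZdivRestriction.
Variables (r a : nat).
Hypotheses (a_gt0 : (0 < a)%N) (lt_ar : (a < r)%N) (co_ar : coprime a r).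

Let adm : admissible r a. Proof. exact/andP. Qed.

Lemma resL_Zdiv_ge i : (a <= i < r)%N ->
  resL r a (Zdiv r a i) = Zdiv (r - a) (r %% (r - a)) (i %% (r - a)).
Proof.
move=> le_ai; apply/ffunP => -[[j lt_j]|]; rewrite !ffunE ?Zdiv_None //.
rewrite !Zdiv_Some /= inordK; last lia.
by rewrite (tau_L adm).
Qed.

Lemma resL_Zdiv_lt i : (i < a)%N -> resL r a (Zdiv r a i) = 0.
Proof.
move=> lt_ia; apply/ffunP => -[[j lt_j]|]; rewrite !ffunE ?Zdiv_None //.
rewrite Zdiv_Some /= inordK; last lia.
by rewrite (tau_R adm) //; case: ltnP => //; lia.
Qed.

Lemma resR_Zdiv_lt i : (i < a)%N ->
  resR r a (Zdiv r a i) = Zdiv a ((a - r %% a) %% a) i.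
Proof.
move=> lt_ia; apply/ffunP => -[[j lt_j]|]; rewrite !ffunE ?Zdiv_None //.
rewrite !Zdiv_Some /= inordK; last lia.
by rewrite (tau_R adm) // ltn_add2l.
Qed.

Lemma resR_Zdiv_ge i : (a <= i < r)%N ->
  resR r a (Zdiv r a i) = [ffun o => if o is Some _ then 1 else 0].
Proof.
move=> le_ai; apply/ffunP => -[[j lt_j]|]; rewrite !ffunE ?Zdiv_None //.
rewrite Zdiv_Some /= inordK; last lia.
rewrite (tau_L adm) //.
by have := @tau_lt (r - a) (r %% (r - a)) (i %% (r - a)) (ltn_pmod _ _); lia.
Qed.

End ZdivRestriction.

Lemma subr_cancel_common (V : zmodType) (x x' y y' u v : V) :
  x + u = v + y -> x' + u = v + y' -> y - y' = x - x'.
Proof.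
by move=> e e'; rewrite -(addrKA v y y') (addrC y) -e -e' (addrC x') addrKA.
Qed.

Lemma Xfamily_rec r a X j : IsXfamily r a X -> (a <= r)%N -> (j.+1 < r)%N ->
  X j + Zdiv r a j.+1 = Zdiv r a j + X (if (a <= j)%N then j - a else j + (r - a))%N.
Proof.
move=> [_ HX] le_ar lt_jr; rewrite -modnDB_if //; last lia.
by rewrite -(@modn_small j.+1 r) // HX //; lia.
Qed.

Section Restriction.
Variables (r a : nat) (X : nat -> tdiv r).
Variables (XL : nat -> tdiv (r - a)) (XR : nat -> tdiv a).
Hypotheses (a_gt0 : (0 < a)%N) (lt_ar : (a < r)%N) (co_ar : coprime a r).
Hypotheses (HX : IsXfamily r a X) (HXL : IsXfamily (r - a) (r %% (r - a)) XL).
Hypothesis HXR : IsXfamily a ((a - r %% a) %% a) XR.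

Lemma resL_X_step j : (j <= r - 2)%N -> ((j + (r - a)) %% r <= r - 2)%N ->
  resL r a (X ((j + (r - a)) %% r)) - XL ((j + (r - a)) %% r %% (r - a))
  = resL r a (X j) - XL (j %% (r - a)).
Proof.
move=> le_jr; have lt_j1r : (j.+1 < r)%N by lia.
have rec := Xfamily_rec HX (ltnW lt_ar) lt_j1r.
rewrite modnDB_if; [|lia|lia].
case: leqP => [le_aj|lt_ja] in rec * => le_j'r; last first.
  move/(congr1 (resL r a)): rec; rewrite !resL_add !resL_Zdiv_lt //; last lia.
  by rewrite addr0 add0r modnDr => ->.
move/(congr1 (resL r a)): rec; rewrite !resL_add !resL_Zdiv_ge //; try lia.
have b_gt0 : (0 < r - a)%N by lia.
have [_ /(_ (j %% (r - a))%N (ltn_pmod _ b_gt0))] := HXL.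
rewrite -[(j %% _).+1]addn1 modnDml addn1.
have -> : ((j %% (r - a) + (r - a - r %% (r - a))) %% (r - a) = (j - a) %% (r - a))%N.
  rewrite modnDml -(modnDr _ (r - a)) addnAC modnD_compl //; last lia.
  by congr (_ %% _)%N; lia.
by move=> recL rec; apply: subr_cancel_common rec recL.
Qed.

Lemma resR_X_step j : (j <= r - 2)%N -> ((j + (r - a)) %% r <= r - 2)%N ->
  resR r a (X ((j + (r - a)) %% r)) - XR ((j + (r - a)) %% r %% a)
  = resR r a (X j) - XR (j %% a).
Proof.
move=> le_jr; have lt_j1r : (j.+1 < r)%N by lia.
have rec := Xfamily_rec HX (ltnW lt_ar) lt_j1r.
rewrite modnDB_if; [|lia|lia].
case: leqP => [le_aj|lt_ja] in rec * => le_j'r.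
  move/(congr1 (resR r a)): rec; rewrite !resR_add !resR_Zdiv_ge //; try lia.
  rewrite addrC => /addrI ->.
  by congr (_ - XR _); rewrite -{2}(subnK le_aj) modnDr.
move/(congr1 (resR r a)): rec; rewrite !resR_add !resR_Zdiv_lt //; try lia.
have [_ /(_ j lt_ja)] := HXR.
rewrite modnD_compl_compl // (@modn_small j.+1); last lia.
have -> : ((j + r) %% a = (j + (r - a)) %% a)%N.
  by rewrite -{1}(subnK (ltnW lt_ar)) addnA modnDr.
rewrite (@modn_small j) //.
by move=> recR rec; apply: subr_cancel_common rec recR.
Qed.

Lemma resL_X i : (i <= r - 2)%N -> resL r a (X i) = XL (i %% (r - a))%N.
Proof.
move=> le_ir; apply/eqP; rewrite -subr_eq0; apply/eqP.
have co : coprime (r - a) r by rewrite coprime_subl // ltnW.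
rewrite (orbit_invariant (f := fun j => resL r a (X j) - XL (j %% (r - a))%N)
  _ co _ le_ir) /=; [|lia|exact: resL_X_step].
by rewrite (proj1 HX) resL_E1 mod0n (proj1 HXL) subrr.
Qed.

Lemma resR_X i : (i <= r - 2)%N -> resR r a (X i) = XR (i %% a)%N.
Proof.
move=> le_ir; apply/eqP; rewrite -subr_eq0; apply/eqP.
have co : coprime (r - a) r by rewrite coprime_subl // ltnW.
rewrite (orbit_invariant (f := fun j => resR r a (X j) - XR (j %% a)%N)
  _ co _ le_ir) /=; [|lia|exact: resR_X_step].
by rewrite (proj1 HX) resR_E1 mod0n (proj1 HXR) subrr.
Qed.

End Restriction.

Local Close Scope ring_scope.

Theorem mainTheorem4 (r a : nat) :
  (0 < a)%N -> (a < r)%N -> coprime a r ->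
  forall (X : nat -> tdiv r) (XL : nat -> tdiv (r - a)) (XR : nat -> tdiv a),
    IsXfamily r a X ->
    IsXfamily (r - a) (r %% (r - a)) XL ->
    IsXfamily a ((a - r %% a) %% a) XR ->
    forall i, (i <= r - 2)%N ->
      resL r a (X i) = XL (i %% (r - a))%N /\ resR r a (X i) = XR (i %% a)%N.
Proof.
move=> a_gt0 lt_ar co_ar X XL XR HX HXL HXR i le_ir.
split; first exact: (resL_X a_gt0 lt_ar co_ar HX HXL le_ir).
exact: (resR_X a_gt0 lt_ar co_ar HX HXR le_ir).
Qed.
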